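(* Consider an instance of the Balancing with Conflicts and Friendship game with $n$ players, $m$ machines and parameters $\alpha>0$, $\beta,\gamma\ge0$. (i) If $\alpha\ge\gamma$, the instance is $(\Lambda,0)$-semi-smooth, where $$\Lambda=1+\frac{m-1}{n}+\frac\beta\alpha\cdot\frac{m-1}{m}+\frac\gamma\alpha\left(\frac{m-1}{m}-\frac{m-1}{n}\right).$$ Hence its price of total anarchy is at most $\Lambda$. (ii) The bound in (i) is tight. For every $m\ge1$ and every $\alpha\ge\gamma$ and $\beta$, take $n=m^2$ players partitioned into $m$ disjoint groups of $m$ players. Let $E^+$ join every two players in the same group and $E^-$ join every two players in different groups. Then the mixed profile in which each player independently chooses each machine with probability $\frac1m$ is a mixed Nash equilibrium whose expected social cost equals $\Lambda\, c(\vec s^* )$. (iii) If $\alpha<\gamma$, the instance is $$\left(1+\frac\beta\alpha\cdot\frac{m-1}{m}+\frac\gamma\alpha\cdot\frac{m-1}{m},\;0\right)\text{-semi-smooth.}$$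
   Context: An instance of the Balancing with Conflicts and Friendship game consists of: - players $N=\{1,\dots,n\}$; - machines $M=\{1,\dots,m\}$; - two disjoint sets $E^+$ (friendship edges) and $E^-$ (conflict edges) of unordered pairs of distinct players; - parameters $\alpha>0$, $\beta\ge0$, $\gamma\ge0$. A state is $\vec s\in M^n$, with $X_k(\vec s)=\{i:s_i=k\}$ and $x_k(\vec s)=|X_k(\vec s)|$. The cost of player $i$ with $s_i=k$ is $$c_i(\vec s)=\alpha x_k(\vec s)+\beta\cdot\#\{j\in X_k(\vec s):\{i,j\}\in E^-\}+\gamma\cdot\#\{j\notin X_k(\vec s):\{i,j\}\in E^+\}.$$ The social cost is $c(\vec s)=\sum_ic_i(\vec s)$, and $\vec s^*$ minimizes $c$. A cost-minimization game is $(\lambda,\mu)$-semi-smooth if there exist probability distributions $\sigma_i$ over each player's strategies such that for every state $\vec s$, $$\sum_i\mathbf E_{s_i'\sim\sigma_i}[c_i(s_i',\vec s_{-i})]\le\lambda c(\vec s^* )+\mu c(\vec s).$$ A coarse correlated equilibrium (CCE) is a distribution $\sigma$ over states with $\mathbf E_{\vec s\sim\sigma}[c_i(\vec s)]\le\mathbf E_{\vec s\sim\sigma}[c_i(s_i',\vec s_{-i})]$ for all $i$ and $s_i'$. A mixed Nash equilibrium is a CCE that is a product distribution. The price of total anarchy is $\sup_\sigma\mathbf E_{\vec s\sim\sigma}[c(\vec s)]/c(\vec s^* )$ over CCE $\sigma$. *)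

From HB Require Import structures.
From mathcomp Require Import all_boot all_order all_algebra.
Set Implicit Arguments. Unset Strict Implicit. Unset Printing Implicit Defensive.
Import Order.TTheory GRing.Theory Num.Theory.
Local Open Scope ring_scope.

(* players 'I_n, machines 'I_m; a state assigns a machine to each player *)
Notation state n m := {ffun 'I_n -> 'I_m}.

Definition load n m (s : state n m) (k : 'I_m) : nat := #|[set j | s j == k]|.

(* Friendship edges F (= E^+) and conflict edges C (= E^-) are given as
   symmetric irreflexive relations on players (unordered pairs of distinct
   players), disjoint from each other. *)
Definition valid_instance n (F C : rel 'I_n) : Prop :=
  [/\ symmetric F, irreflexive F, symmetric C, irreflexive C
    & forall i j, ~~ (F i j && C i j)].

Definition cost (R : realFieldType) n m (F C : rel 'I_n) (a b g : R)
    (s : state n m) (i : 'I_n) : R :=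
  a * (load s (s i))%:R
  + b * (#|[set j | (s j == s i) && C i j]|)%:R
  + g * (#|[set j | (s j != s i) && F i j]|)%:R.

Definition social_cost (R : realFieldType) n m (F C : rel 'I_n) (a b g : R)
    (s : state n m) : R :=
  \sum_(i < n) cost F C a b g s i.

Definition upd n m (s : state n m) (i : 'I_n) (k : 'I_m) : state n m :=
  [ffun j => if j == i then k else s j].

Definition is_optimal (R : realFieldType) n m (F C : rel 'I_n) (a b g : R)
    (sstar : state n m) : Prop :=
  forall s : state n m, social_cost F C a b g sstar <= social_cost F C a b g s.

Definition is_distr (R : realFieldType) (T : finType) (p : {ffun T -> R}) : Prop :=
  (forall t, 0 <= p t) /\ \sum_(t : T) p t = 1.

Definition semi_smooth (R : realFieldType) n m (F C : rel 'I_n) (a b g : R)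
    (lam mu : R) : Prop :=
  exists p : 'I_n -> {ffun 'I_m -> R},
    (forall i, is_distr (p i)) /\
    forall sstar : state n m, is_optimal F C a b g sstar ->
    forall s : state n m,
      \sum_(i < n) \sum_(k < m) p i k * cost F C a b g (upd s i k) i
        <= lam * social_cost F C a b g sstar + mu * social_cost F C a b g s.

Definition expect (R : realFieldType) n m (sig : {ffun state n m -> R})
    (f : state n m -> R) : R :=
  \sum_(s : state n m) sig s * f s.

Definition is_CCE (R : realFieldType) n m (F C : rel 'I_n) (a b g : R)
    (sig : {ffun state n m -> R}) : Prop :=
  is_distr sig /\
  forall (i : 'I_n) (k : 'I_m),
    expect sig (fun s => cost F C a b g s i)
      <= expect sig (fun s => cost F C a b g (upd s i k) i).

Definition product_distr (R : realFieldType) n m (p : 'I_n -> {ffun 'I_m -> R})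
    : {ffun state n m -> R} :=
  [ffun s : state n m => \prod_(i < n) p i (s i)].

Definition is_mixed_NE (R : realFieldType) n m (F C : rel 'I_n) (a b g : R)
    (sig : {ffun state n m -> R}) : Prop :=
  is_CCE F C a b g sig /\
  exists p : 'I_n -> {ffun 'I_m -> R},
    (forall i, is_distr (p i)) /\ sig = product_distr p.

Definition Lambda (R : realFieldType) (n m : nat) (a b g : R) : R :=
  1 + (m%:R - 1) / n%:R + b / a * ((m%:R - 1) / m%:R)
    + g / a * ((m%:R - 1) / m%:R - (m%:R - 1) / n%:R).

Definition Lambda' (R : realFieldType) (m : nat) (a b g : R) : R :=
  1 + b / a * ((m%:R - 1) / m%:R) + g / a * ((m%:R - 1) / m%:R).

(* Tight instance of (ii): n = m^2 players, group of player i is i %/ m *)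
Definition friend_groups (m : nat) : rel 'I_(m * m) :=
  fun i j => (i != j) && ((i : nat) %/ m == (j : nat) %/ m)%N.
Definition conflict_groups (m : nat) : rel 'I_(m * m) :=
  fun i j => ((i : nat) %/ m != (j : nat) %/ m)%N.

Definition uniform_profile (R : realFieldType) (n m : nat) : 'I_n -> {ffun 'I_m -> R} :=
  fun _ => [ffun _ => (m%:R)^-1].
Arguments friend_groups m : clear implicits.
Arguments conflict_groups m : clear implicits.
Arguments uniform_profile R n m : clear implicits.
Arguments Lambda R n m a b g : clear implicits.
Arguments Lambda' R m a b g : clear implicits.

From HB Require Import structures.
From mathcomp Require Import all_boot all_order all_algebra perm.
From mathcomp Require Import ring lra.
Import Order.TTheory GRing.Theory Num.Theory.
Set Implicit Arguments. Unset Strict Implicit. Unset Printing Implicit Defensive.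
Local Open Scope ring_scope.

(* All bounds are witnessed by the uniform profile, in which every player
   picks each of the m machines with probability 1/m.  Writing each cost as a
   sum over ordered pairs of players, the total cost of a player over all her
   unilateral deviations does not depend on the state; summed over players,
   the uniform deviation cost is
     D = (n (m-1) a + n^2 a + b |E^-| + g (m-1) |E^+|) / m
   (edges counted as ordered pairs).  Splitting |E^-| and |E^+| according to
   an arbitrary state sstar with S same-machine pairs, and using the
   Cauchy-Schwarz bound n^2 <= m S, gives
     D <= Lambda' c(sstar) + (a - g) (m-1)/m n,
   which is part (iii) when a < g.  When a >= g the correction is absorbed by
   Lambda = Lambda' + (m-1)/n (1 - g/a), since c(sstar) >= a n^2 / m; this is
   part (i), and the CCE bound is the usual smoothness argument.  For part
   (ii), relabeling machines shows that under the uniform product distribution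
   all deviations have the same expected cost (a mixed Nash equilibrium) and
   the expected social cost is exactly D; on the group instance D equals
   Lambda a m^3, the cost of putting each group on its own machine, which
   meets the lower bound a n^2 / m. *)

Section PairCounts.
Context {R : realFieldType}.

Lemma sum_const_ord m (c : R) : \sum_(k < m) c = m%:R * c.
Proof. by rewrite sumr_const card_ord mulr_natl. Qed.

Lemma card_set_natr (T : finType) (P : pred T) :
  (#|[set j | P j]|)%:R = \sum_j (P j)%:R :> R.
Proof.
rewrite -sum1_card big_mkcond /= natr_sum; apply: eq_bigr => j _.
by rewrite inE; case: (P j).
Qed.

Lemma sum_eq_indicator m (k0 : 'I_m) (f : 'I_m -> R) :
  \sum_k (k0 == k)%:R * f k = f k0.
Proof.
rewrite (bigD1 k0) //= eqxx mul1r big1 ?addr0 // => k /negbTE.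
by rewrite eq_sym => ->; rewrite mul0r.
Qed.

Lemma sum_indicator m (k0 : 'I_m) : \sum_k (k0 == k)%:R = 1 :> R.
Proof.
by rewrite -[RHS](sum_eq_indicator k0 (fun _ => 1)); apply: eq_bigr => k _; rewrite mulr1.
Qed.

(* Number of ordered pairs (i, j) of players related by P; the costs of the
   game are linear combinations of such counts. *)
Definition pair_count n (P : rel 'I_n) : R := \sum_i \sum_j (P i j)%:R.

Lemma pair_count_ge0 n (P : rel 'I_n) : 0 <= pair_count P.
Proof. by apply: sumr_ge0 => i _; apply: sumr_ge0 => j _; rewrite ler0n. Qed.

Lemma pair_count0 n (P : rel 'I_n) : (forall i j, ~~ P i j) -> pair_count P = 0.
Proof. by move=> nP; apply: big1 => i _; apply: big1 => j _; rewrite (negbTE (nP i j)). Qed.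

Lemma eq_pair_count n (P Q : rel 'I_n) : P =2 Q -> pair_count P = pair_count Q.
Proof. by move=> PQ; apply: eq_bigr => i _; apply: eq_bigr => j _; rewrite PQ. Qed.

Lemma pair_count_le n (P Q : rel 'I_n) : subrel P Q -> pair_count P <= pair_count Q.
Proof.
move=> PQ; apply: ler_sum => i _; apply: ler_sum => j _.
by case: (boolP (P i j)) => [/PQ -> //|_]; rewrite ler0n.
Qed.

Lemma pair_count_split n (Q P : rel 'I_n) :
  pair_count P = pair_count [rel i j | Q i j && P i j]
                 + pair_count [rel i j | ~~ Q i j && P i j].
Proof.
rewrite /pair_count -big_split; apply: eq_bigr => i _; rewrite -big_split.
by apply: eq_bigr => j _ /=; case: (Q i j); case: (P i j); rewrite ?add0r ?addr0.
Qed.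

Lemma pair_count_all n : pair_count [rel _ _ : 'I_n | true] = n%:R * n%:R.
Proof. by rewrite /pair_count /= !sum_const_ord mulr1. Qed.

Lemma pair_count_diag n : pair_count [rel i j : 'I_n | i == j] = n%:R.
Proof.
rewrite /pair_count (eq_bigr (fun _ => 1)) ?sum_const_ord ?mulr1 // => i _.
exact: sum_indicator.
Qed.

Lemma pair_count_compl n (Q : rel 'I_n) :
  pair_count [rel i j | ~~ Q i j] = n%:R * n%:R - pair_count Q.
Proof.
rewrite -pair_count_all /pair_count -sumrB; apply: eq_bigr => i _.
by rewrite -sumrB; apply: eq_bigr => j _ /=; case: (Q i j); rewrite ?subrr ?subr0.
Qed.

Lemma pair_count_offdiag n (Q : rel 'I_n) : reflexive Q ->
  pair_count [rel i j | (i != j) && Q i j] = pair_count Q - n%:R.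
Proof.
move=> reflQ; rewrite -pair_count_diag /pair_count -sumrB; apply: eq_bigr => i _.
rewrite -sumrB; apply: eq_bigr => j _ /=.
by case: eqP => [->|_]; rewrite ?reflQ ?subrr ?subr0.
Qed.

Lemma sqr_sum_le m (x : 'I_m -> R) :
  (\sum_k x k) ^+ 2 <= m%:R * \sum_k x k ^+ 2.
Proof.
have dev : \sum_k \sum_l (x k - x l) ^+ 2
           = 2%:R * (m%:R * \sum_k x k ^+ 2) - 2%:R * (\sum_k x k) ^+ 2.
  transitivity (\sum_k \sum_l (x k ^+ 2 + x l ^+ 2 - 2%:R * x k * x l)).
    by apply: eq_bigr => k _; apply: eq_bigr => l _; ring.
  under eq_bigr do rewrite sumrB big_split /= sum_const_ord -mulr_sumr.
  by rewrite sumrB big_split /= sum_const_ord -mulr_suml -!mulr_sumr; ring.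
have : 0 <= \sum_k \sum_l (x k - x l) ^+ 2.
  by apply: sumr_ge0 => k _; apply: sumr_ge0 => l _; apply: sqr_ge0.
rewrite dev; lra.
Qed.

End PairCounts.

Section Costs.
Variables (R : realFieldType) (n m : nat) (F C : rel 'I_n) (a b g : R).

Definition same_machine (s : state n m) : rel 'I_n := [rel i j | s j == s i].

Lemma cost_as_sum (s : state n m) i :
  cost F C a b g s i = \sum_j (a * (s j == s i)%:R
     + b * ((s j == s i) && C i j)%:R + g * ((s j != s i) && F i j)%:R).
Proof. by rewrite /cost /load !card_set_natr !big_split /= !mulr_sumr. Qed.

Lemma social_cost_pairs (s : state n m) :
  social_cost F C a b g s =
    a * pair_count (same_machine s)
    + b * pair_count [rel i j | same_machine s i j && C i j]
    + g * pair_count [rel i j | ~~ same_machine s i j && F i j].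
Proof.
rewrite /social_cost /pair_count !mulr_sumr -!big_split; apply: eq_bigr => i _.
by rewrite cost_as_sum !mulr_sumr -!big_split.
Qed.

(* n^2 <= m S: the loads sum to n and S is the sum of their squares. *)
Lemma same_machine_pairs_lb (s : state n m) :
  n%:R * n%:R <= m%:R * pair_count (same_machine s) :> R.
Proof.
pose x k : R := \sum_j (s j == k)%:R.
have sum_x : \sum_k x k = n%:R.
  rewrite /x exchange_big /= (eq_bigr (fun _ => 1)) ?sum_const_ord ?mulr1 //.
  by move=> j _; apply: sum_indicator.
have sqr_x : pair_count (same_machine s) = \sum_k x k ^+ 2.
  transitivity (\sum_i \sum_k (s i == k)%:R * x k).
    by apply: eq_bigr => i _; rewrite sum_eq_indicator.
  rewrite exchange_big /=; apply: eq_bigr => k _; rewrite -mulr_suml.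
  by congr (_ * _); apply: eq_bigr => j _.
by rewrite sqr_x -sum_x -expr2 sqr_sum_le.
Qed.

(* Every state costs at least a n^2 / m: the load term alone is minimized by
   perfectly balanced machines. *)
Lemma social_cost_lb (s : state n m) :
  0 <= a -> 0 <= b -> 0 <= g ->
  a * (n%:R * n%:R) <= m%:R * social_cost F C a b g s.
Proof.
move=> a0 b0 g0; rewrite social_cost_pairs !mulrDr mulrCA.
have load_lb := ler_wpM2l a0 (same_machine_pairs_lb s).
have conflicts_ge0 :
    0 <= m%:R * (b * pair_count [rel i j | same_machine s i j && C i j]) :> R.
  by rewrite !mulr_ge0 ?ler0n ?pair_count_ge0.
have friendships_ge0 :
    0 <= m%:R * (g * pair_count [rel i j | ~~ same_machine s i j && F i j]) :> R.
  by rewrite !mulr_ge0 ?ler0n ?pair_count_ge0.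
lra.
Qed.

Hypotheses (irrF : irreflexive F) (irrC : irreflexive C).

Lemma deviation_cost_sum (s : state n m) i :
  \sum_(k < m) cost F C a b g (upd s i k) i =
  (m%:R - 1) * a + \sum_j (a + b * (C i j)%:R + g * (m%:R - 1) * (F i j)%:R).
Proof.
under eq_bigr do rewrite cost_as_sum ffunE eqxx.
rewrite exchange_big /= (bigD1 i) //= [in RHS](bigD1 i) //= irrF irrC.
rewrite [X in X + _](eq_bigr (fun _ => a)); last first.
  by move=> k _; rewrite ffunE !eqxx /= mulr1 !mulr0 !addr0.
rewrite sum_const_ord !mulr0 !addr0 addrA; congr (_ + _); first ring.
apply: eq_bigr => j ji.
transitivity (\sum_(k < m) ((a + b * (C i j)%:R - g * (F i j)%:R) * (s j == k)%:R
                            + g * (F i j)%:R)).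
  apply: eq_bigr => k _; rewrite ffunE (negbTE ji).
  by case: (s j == k); case: (C i j); case: (F i j); rewrite /=; ring.
by rewrite big_split /= -mulr_sumr sum_const_ord sum_indicator; ring.
Qed.

(* Expected cost of a deviation to a uniformly random machine, summed over
   all players; again independent of the state. *)
Definition uniform_deviation_cost : R :=
  m%:R^-1 * (n%:R * (m%:R - 1) * a + n%:R * n%:R * a
             + b * pair_count C + g * (m%:R - 1) * pair_count F).

Lemma uniform_deviation_total (s : state n m) :
  \sum_i \sum_(k < m) m%:R^-1 * cost F C a b g (upd s i k) i
  = uniform_deviation_cost.
Proof.
under eq_bigr do rewrite -mulr_sumr deviation_cost_sum.
rewrite -mulr_sumr /uniform_deviation_cost /pair_count; congr (_ * _).
rewrite big_split /= sum_const_ord.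
under eq_bigr do rewrite !big_split /= sum_const_ord -!mulr_sumr.
by rewrite !big_split /= sum_const_ord -!mulr_sumr; ring.
Qed.

End Costs.
Arguments uniform_deviation_cost {R} n m F C a b g.

(* The heart of parts (i) and (iii), in terms of the pair counts of a state
   sstar: S same-machine pairs, Ci/Cc conflict pairs on the same/different
   machines, Fi/Fc friendship pairs on the same/different machines, so that
   c(sstar) = a S + b Ci + g Fc. *)
Lemma deviation_le_Lambda' (R : realFieldType) (N M a b g S Ci Cc Fi Fc : R) :
  1 <= M -> 0 < a -> 0 <= b -> 0 <= g -> 0 <= Ci -> 0 <= Fc ->
  Cc <= N * N - S -> Fi <= S - N -> N * N <= M * S ->
  M^-1 * (N * (M - 1) * a + N * N * a + b * (Ci + Cc) + g * (M - 1) * (Fi + Fc))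
  <= (1 + b / a * ((M - 1) / M) + g / a * ((M - 1) / M)) * (a * S + b * Ci + g * Fc)
     + (a - g) * ((M - 1) / M) * N.
Proof.
move=> M1 a0 b0 g0 Ci0 Fc0 hCc hFi hS.
have M0 : 0 < M by lra.
set v := (M - 1) / M.
have v0 : 0 <= v by rewrite divr_ge0 //; lra.
have iM0 : 0 <= M^-1 by rewrite invr_ge0 (ltW M0).
have t0 : 0 <= (b + g) * v / a.
  by apply: mulr_ge0; [apply: mulr_ge0 => //; lra | rewrite invr_ge0; lra].
have balance : 0 <= S - N * N / M by rewrite subr_ge0 ler_pdivrMr // [S * M]mulrC.
have decomp : (1 + b / a * v + g / a * v) * (a * S + b * Ci + g * Fc)
  + (a - g) * v * N
  - M^-1 * (N * (M - 1) * a + N * N * a + b * (Ci + Cc) + g * (M - 1) * (Fi + Fc))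
  = (b + g) * v / a * (b * Ci + g * Fc) + b * v * Ci + g * M^-1 * Fc
    + b * M^-1 * (N * N - S - Cc) + (a + b) * (S - N * N / M)
    + g * v * (S - N - Fi).
  by rewrite /v; field; rewrite !gt_eqF.
rewrite -subr_ge0 decomp.
have slackC : 0 <= N * N - S - Cc by lra.
have slackF : 0 <= S - N - Fi by lra.
have := mulr_ge0 t0 (addr_ge0 (mulr_ge0 b0 Ci0) (mulr_ge0 g0 Fc0)).
have := mulr_ge0 (mulr_ge0 b0 v0) Ci0.
have := mulr_ge0 (mulr_ge0 g0 iM0) Fc0.
have := mulr_ge0 (mulr_ge0 b0 iM0) slackC.
have := mulr_ge0 (addr_ge0 (ltW a0) b0) balance.
have := mulr_ge0 (mulr_ge0 g0 v0) slackF.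
lra.
Qed.

Lemma Lambda_split (R : realFieldType) n m (a b g : R) :
  Lambda R n m a b g = Lambda' R m a b g + (m%:R - 1) / n%:R * (1 - g / a).
Proof. by rewrite /Lambda /Lambda'; ring. Qed.

(* When a >= g the correction term of [deviation_le_Lambda'] is absorbed by
   this gap, because every state costs at least a n^2 / m. *)
Lemma correction_le_Lambda_gap (R : realFieldType) (N M a g c : R) :
  0 < N -> 1 <= M -> 0 < a -> g <= a -> a * (N * N) <= M * c ->
  (a - g) * ((M - 1) / M) * N <= (M - 1) / N * (1 - g / a) * c.
Proof.
move=> N0 M1 a0 ga hc.
have M0 : 0 < M by lra.
have gap : (M - 1) / N * (1 - g / a) * c - (a - g) * ((M - 1) / M) * N
           = (M - 1) * (a - g) / (N * a * M) * (M * c - a * (N * N)).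
  by field; rewrite !gt_eqF.
rewrite -subr_ge0 gap; apply: mulr_ge0; last lra.
by apply: divr_ge0; [apply: mulr_ge0 | rewrite !mulr_ge0 // ltW]; lra.
Qed.

Section Smoothness.
Variables (R : realFieldType) (n m : nat) (F C : rel 'I_n) (a b g : R).
Hypotheses (m0 : (0 < m)%N) (irrF : irreflexive F) (irrC : irreflexive C).
Hypotheses (a0 : 0 < a) (b0 : 0 <= b) (g0 : 0 <= g).

Lemma uniform_profile_distr i : is_distr (uniform_profile R n m i).
Proof.
split => [k|]; first by rewrite ffunE invr_ge0 ler0n.
under eq_bigr do rewrite ffunE.
by rewrite sum_const_ord mulfV // pnatr_eq0 -lt0n.
Qed.

Lemma uniform_deviation_le (sstar : state n m) :
  uniform_deviation_cost n m F C a b g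
  <= Lambda' R m a b g * social_cost F C a b g sstar
     + (a - g) * ((m%:R - 1) / m%:R) * n%:R.
Proof.
pose same := same_machine sstar.
have hCc : pair_count [rel i j | ~~ same i j && C i j]
           <= n%:R * n%:R - pair_count same :> R.
  by rewrite -pair_count_compl; apply: pair_count_le => i j /= /andP [].
have hFi : pair_count [rel i j | same i j && F i j] <= pair_count same - n%:R :> R.
  rewrite -pair_count_offdiag => [|i]; last exact: eqxx.
  apply: pair_count_le => i j /= /andP [-> Fij]; rewrite andbT.
  by apply: contraTneq Fij => ->; rewrite irrF.
rewrite /uniform_deviation_cost social_cost_pairs (pair_count_split same C).
rewrite (pair_count_split same F) -/same.
apply: deviation_le_Lambda' => //; rewrite ?ler1n ?pair_count_ge0 //.
exact: same_machine_pairs_lb.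
Qed.

Lemma semi_smooth_uniform (lam : R) :
  (forall sstar : state n m,
     uniform_deviation_cost n m F C a b g <= lam * social_cost F C a b g sstar) ->
  @semi_smooth R n m F C a b g lam 0.
Proof.
move=> bound; exists (uniform_profile R n m); split; first exact: uniform_profile_distr.
move=> sstar _ s; rewrite mul0r addr0; apply: le_trans _ (bound sstar).
rewrite -(uniform_deviation_total a b g irrF irrC s).
by under eq_bigr do under eq_bigr do rewrite ffunE.
Qed.

Lemma semi_smooth_Lambda : (0 < n)%N -> g <= a ->
  @semi_smooth R n m F C a b g (Lambda R n m a b g) 0.
Proof.
move=> n0 ga; apply: semi_smooth_uniform => sstar.
apply: le_trans (uniform_deviation_le sstar) _.
rewrite Lambda_split [X in _ <= X]mulrDl lerD2l; apply: correction_le_Lambda_gap => //.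
- by rewrite ltr0n.
- by rewrite ler1n.
- exact: social_cost_lb (ltW a0) b0 g0.
Qed.

Lemma semi_smooth_Lambda' : a < g -> @semi_smooth R n m F C a b g (Lambda' R m a b g) 0.
Proof.
move=> ag; apply: semi_smooth_uniform => sstar.
apply: le_trans (uniform_deviation_le sstar) _.
rewrite gerDl -mulrA mulr_le0_ge0 //; first lra.
by rewrite mulr_ge0 ?ler0n // divr_ge0 ?ler0n // subr_ge0 ler1n.
Qed.

End Smoothness.

Section Expectation.
Variables (R : realFieldType) (n m : nat).
Implicit Types (sig : {ffun state n m -> R}) (f h : state n m -> R).

Lemma expect_le sig f h : (forall s, 0 <= sig s) -> (forall s, f s <= h s) ->
  expect sig f <= expect sig h.
Proof. by move=> sig0 fh; apply: ler_sum => s _; apply: ler_wpM2l. Qed.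

Lemma expect_sum (I : finType) sig (f : I -> state n m -> R) :
  expect sig (fun s => \sum_i f i s) = \sum_i expect sig (f i).
Proof. by rewrite /expect exchange_big; apply: eq_bigr => s _; rewrite mulr_sumr. Qed.

Lemma expect_scale sig (c : R) f : expect sig (fun s => c * f s) = c * expect sig f.
Proof. by rewrite /expect mulr_sumr; apply: eq_bigr => s _; rewrite mulrCA. Qed.

Lemma expect_affine sig (c d : R) f : is_distr sig ->
  expect sig (fun s => c + d * f s) = c + d * expect sig f.
Proof.
move=> [_ sig1]; rewrite -expect_scale /expect -[c in RHS]mul1r -sig1 mulr_suml -big_split.
by apply: eq_bigr => s _; rewrite mulrDr mulrC.
Qed.

End Expectation.

(* The standard smoothness argument: for a CCE sigma, each player's expected
   cost is at most that of deviating according to the semi-smoothness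
   profile, and summing these deviations is controlled by semi-smoothness. *)
Lemma semi_smooth_CCE_bound (R : realFieldType) n m (F C : rel 'I_n)
    (a b g lam mu : R) (sig : {ffun state n m -> R}) (sstar : state n m) :
  @semi_smooth R n m F C a b g lam mu -> is_CCE F C a b g sig ->
  is_optimal F C a b g sstar ->
  expect sig (social_cost F C a b g)
  <= lam * social_cost F C a b g sstar + mu * expect sig (social_cost F C a b g).
Proof.
move=> [p [distr_p smooth]] [distr_sig no_regret] opt.
have [sig0 _] := distr_sig.
have regret i : expect sig (fun s => cost F C a b g s i)
    <= \sum_k p i k * expect sig (fun s => cost F C a b g (upd s i k) i).
  have [p0 p1] := distr_p i.
  rewrite -[X in X <= _]mul1r -p1 mulr_suml.
  by apply: ler_sum => k _; apply: ler_wpM2l => //; apply: no_regret.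
have split_players : expect sig (social_cost F C a b g)
    = \sum_i expect sig (fun s => cost F C a b g s i) by rewrite -expect_sum.
rewrite -expect_affine //; apply: (le_trans _ (expect_le sig0 (smooth sstar opt))).
rewrite split_players expect_sum; apply: ler_sum => i _.
apply: le_trans (regret i) _; rewrite expect_sum.
by under [X in _ <= X]eq_bigr do rewrite expect_scale.
Qed.

(* Costs depend only on which
   players share a machine, so they are invariant; this gives the symmetry
   needed to show that the uniform profile is an equilibrium. *)
Definition relabel n m (t : 'I_m -> 'I_m) (s : state n m) : state n m :=
  [ffun j => t (s j)].

Lemma cost_relabel (R : realFieldType) n m (F C : rel 'I_n) (a b g : R)
    (t : 'I_m -> 'I_m) (s : state n m) i :
  injective t -> cost F C a b g (relabel t s) i = cost F C a b g s i.
Proof.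
by move=> inj_t; rewrite !cost_as_sum; under eq_bigr do rewrite !ffunE (inj_eq inj_t).
Qed.

Lemma upd_relabel n m (t : 'I_m -> 'I_m) (s : state n m) i k : involutive t ->
  upd (relabel t s) i k = relabel t (upd s i (t k)).
Proof.
by move=> tK; apply/ffunP => j; rewrite !ffunE; case: (j == i); rewrite ?tK ?ffunE.
Qed.

Section UniformProduct.
Variables (R : realFieldType) (n m : nat).
Hypothesis m0 : (0 < m)%N.

Lemma uniform_product_value (s : state n m) :
  product_distr (uniform_profile R n m) s = m%:R^-1 ^+ n.
Proof.
by rewrite ffunE (eq_bigr (fun _ => m%:R^-1)) ?prodr_const ?card_ord // => i _; rewrite ffunE.
Qed.

Lemma uniform_product_distr : is_distr (product_distr (uniform_profile R n m)).
Proof.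
split => [s|]; first by rewrite uniform_product_value exprn_ge0 // invr_ge0 ler0n.
under eq_bigr do rewrite uniform_product_value.
rewrite sumr_const card_ffun !card_ord -exprMn_n -mulr_natr mulVf ?expr1n //.
by rewrite pnatr_eq0 -lt0n.
Qed.

Lemma expect_uniform (f : state n m -> R) :
  expect (product_distr (uniform_profile R n m)) f = m%:R^-1 ^+ n * \sum_s f s.
Proof.
by rewrite /expect mulr_sumr; apply: eq_bigr => s _; rewrite uniform_product_value.
Qed.

(* If h ignores coordinate i, the states with s i = k carry a 1/m share of
   the total of h: swapping the values k and k' of coordinate i is a
   bijection between the states with s i = k and those with s i = k'. *)
Lemma sum_coordinate_fixed (h : state n m -> R) i k :
  (forall s k', h (upd s i k') = h s) ->
  \sum_(s : state n m) (s i == k)%:R * h s = m%:R^-1 * \sum_(s : state n m) h s.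
Proof.
move=> h_ign.
have same_share k1 k2 : \sum_(s : state n m) (s i == k1)%:R * h s
                        = \sum_(s : state n m) (s i == k2)%:R * h s.
  pose swap (s : state n m) := upd s i (tperm k1 k2 (s i)).
  have swapK : involutive swap.
    move=> s; rewrite /swap !ffunE eqxx tpermK.
    by apply/ffunP => j; rewrite !ffunE; case: eqP => [->|].
  have swap_k2 x : (tperm k1 k2 x == k2) = (x == k1).
    by rewrite -[X in _ == X](tpermL k1 k2) (inj_eq perm_inj).
  rewrite [RHS](reindex_inj (inv_inj swapK)) /=; apply: eq_bigr => s _.
  by rewrite /swap ffunE eqxx h_ign swap_k2.
have total : \sum_(s : state n m) h s = m%:R * \sum_(s : state n m) (s i == k)%:R * h s.
  transitivity (\sum_(s : state n m) \sum_k' (s i == k')%:R * h s).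
    by apply: eq_bigr => s _; rewrite -mulr_suml sum_indicator mul1r.
  by rewrite exchange_big /= (eq_bigr _ (fun k' _ => same_share k' k)) sum_const_ord.
by rewrite total mulKf // pnatr_eq0 -lt0n.
Qed.

Lemma sum_average_deviations (f : state n m -> R) i :
  \sum_(s : state n m) f s = m%:R^-1 * \sum_(s : state n m) \sum_(k < m) f (upd s i k).
Proof.
transitivity (\sum_(s : state n m) \sum_(k < m) (s i == k)%:R * f (upd s i k)).
  apply: eq_bigr => s _; rewrite sum_eq_indicator.
  by congr f; apply/ffunP => j; rewrite ffunE; case: eqP => [->|].
rewrite exchange_big /= [X in _ = _ * X]exchange_big /= mulr_sumr.
apply: eq_bigr => k _; apply: sum_coordinate_fixed => s k'.
by congr f; apply/ffunP => j; rewrite !ffunE; case: (j == i).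
Qed.

(* Under uniform play, the expected cost of a deviation to k does not depend
   on k: relabel machines k and k'. *)
Lemma sum_deviation_indep (F C : rel 'I_n) (a b g : R) i (k k' : 'I_m) :
  \sum_(s : state n m) cost F C a b g (upd s i k) i
  = \sum_(s : state n m) cost F C a b g (upd s i k') i.
Proof.
have tK := tpermK k k'.
rewrite (reindex_inj (inv_inj (_ : involutive (relabel (tperm k k'))))) /=; last first.
  by move=> s; apply/ffunP => j; rewrite !ffunE tK.
apply: eq_bigr => s _.
by rewrite upd_relabel // cost_relabel ?tpermL //; exact: perm_inj.
Qed.

(* Part (ii), equilibrium: averaging over the machine of player i shows that
   her expected cost equals that of any fixed deviation. *)
Lemma uniform_is_mixed_NE (F C : rel 'I_n) (a b g : R) :
  is_mixed_NE F C a b g (product_distr (uniform_profile R n m)).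
Proof.
split; last by exists (uniform_profile R n m); split => // i; exact: uniform_profile_distr.
split => [|i k]; first exact: uniform_product_distr.
rewrite !expect_uniform (sum_average_deviations _ i) exchange_big /=.
under eq_bigr do rewrite (sum_deviation_indep F C a b g i _ k).
by rewrite sum_const_ord mulKf // pnatr_eq0 -lt0n.
Qed.

Lemma expected_social_cost_uniform (F C : rel 'I_n) (a b g : R) :
  irreflexive F -> irreflexive C ->
  expect (product_distr (uniform_profile R n m)) (social_cost F C a b g)
  = uniform_deviation_cost n m F C a b g.
Proof.
move=> irrF irrC; have [_ sig1] := uniform_product_distr.
transitivity (expect (product_distr (uniform_profile R n m))
                     (fun _ => uniform_deviation_cost n m F C a b g)); last first.
  by rewrite /expect -mulr_suml sig1 mul1r.
rewrite !expect_uniform /social_cost exchange_big /=; congr (_ * _).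
under eq_bigr => i _ do rewrite (sum_average_deviations _ i) mulr_sumr.
rewrite exchange_big /=; apply: eq_bigr => s _.
by rewrite -(uniform_deviation_total a b g irrF irrC s); under eq_bigr do rewrite mulr_sumr.
Qed.

End UniformProduct.

Lemma quotient_class_size m q N : (0 < m)%N ->
  (\sum_(0 <= j < N * m) ((j %/ m)%N == q) = if (q < N)%N then m else 0)%N.
Proof.
move=> m0; elim: N => [|N IH]; first by rewrite mul0n big_geq.
rewrite mulSnr (big_cat_nat (leq0n (N * m)) (leq_addr m (N * m))) IH /=.
rewrite -{1}[(N * m)%N]add0n big_addn addKn.
rewrite (eq_big_nat _ _ (F2 := fun _ => ((N == q) : nat))); last first.
  by move=> r /andP [_ hr]; rewrite addnC divnMDl // divn_small // addn0.
rewrite sum_nat_const_nat subn0 ltnS.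
by case: (ltngtP q N) => [h|h|h] /=; rewrite ?muln0 ?muln1 ?addn0.
Qed.

Section TightInstance.
Variables (R : realFieldType) (m : nat).
Hypothesis m0 : (0 < m)%N.

Definition same_group : rel 'I_(m * m) :=
  [rel i j : 'I_(m * m) | (i %/ m == j %/ m)%N].

Lemma group_lt (i : 'I_(m * m)) : (i %/ m < m)%N.
Proof. by rewrite ltn_divLR. Qed.

Definition grouping_state : state (m * m) m := [ffun i => Ordinal (group_lt i)].

Lemma pair_count_same_group : pair_count same_group = m%:R * (m%:R * m%:R) :> R.
Proof.
rewrite /pair_count (eq_bigr (fun _ => m%:R)) ?sum_const_ord ?natrM ?mulrA //.
move=> i _; rewrite /= -natr_sum; congr _%:R.
rewrite (eq_bigr (fun j : 'I_(m * m) => ((j %/ m)%N == (i %/ m)%N) : nat)); last first.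
  by move=> j _; rewrite /same_group /= eq_sym.
by rewrite -(big_mkord xpredT (fun j => ((j %/ m)%N == (i %/ m)%N) : nat))
           quotient_class_size // group_lt.
Qed.

Lemma grouping_state_cost (a b g : R) :
  social_cost (friend_groups m) (conflict_groups m) a b g grouping_state
  = a * (m%:R * (m%:R * m%:R)).
Proof.
have same_s0 i j : same_machine grouping_state i j = same_group i j.
  by rewrite /same_machine /same_group /= !ffunE eq_sym.
rewrite social_cost_pairs (eq_pair_count same_s0) pair_count_same_group.
rewrite !pair_count0 ?mulr0 ?addr0 // => i j /=; rewrite same_s0 /same_group /=.
  by rewrite /friend_groups andbCA andNb andbF.
by rewrite /conflict_groups andbN.
Qed.

Lemma friend_groups_irr : irreflexive (friend_groups m).
Proof. by move=> i; rewrite /friend_groups eqxx. Qed.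

Lemma conflict_groups_irr : irreflexive (conflict_groups m).
Proof. by move=> i; rewrite /conflict_groups eqxx. Qed.

Variables (a b g : R).
Hypotheses (a0 : 0 < a) (b0 : 0 <= b) (g0 : 0 <= g).

(* The grouping state is optimal, by the general lower bound a n^2 / m. *)
Lemma tight_optimal_cost (sstar : state (m * m) m) :
  is_optimal (friend_groups m) (conflict_groups m) a b g sstar ->
  social_cost (friend_groups m) (conflict_groups m) a b g sstar
  = a * (m%:R * (m%:R * m%:R)).
Proof.
move=> opt; apply/eqP; rewrite eq_le -{1}(grouping_state_cost a b g) opt /=.
have lb := social_cost_lb (friend_groups m) (conflict_groups m) sstar (ltW a0) b0 g0.
rewrite -(ler_pM2l (_ : 0 < m%:R)) ?ltr0n //; apply: le_trans lb.
by rewrite natrM -!mulrA mulrCA.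
Qed.

(* Part (ii), tightness: |E^-| = n^2 - m^3 and |E^+| = m^3 - n. *)
Lemma tight_expected_cost (sstar : state (m * m) m) :
  is_optimal (friend_groups m) (conflict_groups m) a b g sstar ->
  expect (product_distr (uniform_profile R (m * m) m))
         (social_cost (friend_groups m) (conflict_groups m) a b g)
  = Lambda R (m * m) m a b g
    * social_cost (friend_groups m) (conflict_groups m) a b g sstar.
Proof.
move=> opt; rewrite expected_social_cost_uniform //; last first.
- exact: conflict_groups_irr.
- exact: friend_groups_irr.
have conflicts : pair_count (conflict_groups m)
                 = (m * m)%:R * (m * m)%:R - m%:R * (m%:R * m%:R) :> R.
  by rewrite -pair_count_same_group -pair_count_compl.
have friends : pair_count (friend_groups m) = m%:R * (m%:R * m%:R) - (m * m)%:R :> R.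
  by rewrite -pair_count_same_group -pair_count_offdiag // => i; rewrite /same_group /=.
rewrite tight_optimal_cost // /uniform_deviation_cost conflicts friends /Lambda natrM.
by field; rewrite pnatr_eq0 -lt0n m0 gt_eqF.
Qed.
End TightInstance.

Theorem theorem11 :
  (* parts (i) and (iii): an arbitrary instance *)
  (forall (R : realFieldType) (n m : nat) (F C : rel 'I_n) (a b g : R),
     (0 < n)%N -> (0 < m)%N -> valid_instance F C ->
     0 < a -> 0 <= b -> 0 <= g ->
     (g <= a ->
        @semi_smooth R n m F C a b g (Lambda R n m a b g) 0 /\
        forall (sig : {ffun state n m -> R}) (sstar : state n m),
          is_CCE F C a b g sig -> is_optimal F C a b g sstar ->
          expect sig (social_cost F C a b g)
            <= Lambda R n m a b g * social_cost F C a b g sstar)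
     /\
     (a < g ->
        @semi_smooth R n m F C a b g (Lambda' R m a b g) 0))
  /\
  (* part (ii): tightness *)
  (forall (R : realFieldType) (m : nat) (a b g : R),
     (0 < m)%N -> 0 < a -> 0 <= b -> 0 <= g -> g <= a ->
     let F := friend_groups m in
     let C := conflict_groups m in
     let sig := product_distr (uniform_profile R (m * m)%N m) in
     is_mixed_NE F C a b g sig /\
     forall sstar : state (m * m)%N m, is_optimal F C a b g sstar ->
       expect sig (social_cost F C a b g)
         = Lambda R (m * m)%N m a b g * social_cost F C a b g sstar).
Proof.
split.
- move=> R n m F C a b g n0 m0 [_ irrF _ irrC _] a0 b0 g0; split.
  + move=> ga; have smooth := semi_smooth_Lambda m0 irrF irrC a0 b0 g0 n0 ga.
    split=> // sig sstar cce opt.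
    by have := semi_smooth_CCE_bound smooth cce opt; rewrite mul0r addr0.
  + exact: semi_smooth_Lambda' m0 irrF irrC a0 b0 g0.
- move=> R m a b g m0 a0 b0 g0 _ F C sig; split; first exact: uniform_is_mixed_NE.
  exact: tight_expected_cost.
Qed.
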